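(* Consider the labeled Galton–Watson tree $\mathcal{T}$ with $\omega<\omega_0$, where $\omega_0=1/\tau$ and $\tau=\frac{1}{r(a+b)}\sum_{\ell\in\mathcal{L}}|a\mu(\ell)-b\nu(\ell)|$. Then as $R\to\infty$, for all $x\in\{1,\dots,r\}$, \[\mathbb{P}(\sigma_\rho=x\mid\mathcal{T},\sigma_{\partial\mathcal{T}_R})\to\frac1r\] asymptotically almost surely (in probability).
   Context: Labeled Galton–Watson tree $\mathcal{T}$ with root $\rho$, parameters $r\ge2$, positive constants $a,b$, $\omega>0$, finite label set $\mathcal{L}$ and distinct probability measures $\mu,\nu$ on $\mathcal{L}$: each node has a Poisson number of children with mean $d=\omega\frac{a+(r-1)b}{r(a+b)}$; the root's attribute $\sigma_\rho$ is uniform on $\{1,\dots,r\}$; each child independently has its parent's attribute with probability $\frac{a}{a+(r-1)b}$ and each of the $r-1$ other attributes with probability $\frac{b}{a+(r-1)b}$; each parent–child edge is independently labeled with distribution $\mu$ if the two attributes agree and $\nu$ otherwise. $\mathcal{T}_R$ is the tree truncated at depth $R$, $\partial\mathcal{T}_R$ its nodes at depth $R$, and $\sigma_{\partial\mathcal{T}_R}$ their attributes; conditioning on $\mathcal{T}$ means on the tree structure together with its edge labels. *)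

From Stdlib Require Import Reals List Lra Arith Factorial.
Open Scope R_scope.

Definition rsum (n : nat) (f : nat -> R) : R :=
  fold_right Rplus 0 (map f (seq 0 n)).

(* Observed data at depth R: the (planar) tree T_R with its edge labels,
   and the attributes of the nodes at depth R (stored in the leaves).
   Nodes at depth < R are [Node] (possibly with no children). *)
Inductive obs (L : Type) : Type :=
| Leaf : nat -> obs L
| Node : list (L * obs L) -> obs L.
Arguments Leaf {L} _.
Arguments Node {L} _.

Definition poisson (lam : R) (k : nat) : R :=
  exp (- lam) * lam ^ k / INR (fact k).

Section GW.
Variables (L : Type) (r : nat) (a b omega : R) (mu nu : L -> R).

Definition deg : R := omega * (a + INR (r - 1) * b) / (INR r * (a + b)).

Definition trans (x y : nat) : R :=
  if Nat.eqb x y then a / (a + INR (r - 1) * b) else b / (a + INR (r - 1) * b).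

(* edge-label distribution given parent/child attributes *)
Definition labp (x y : nat) (l : L) : R :=
  if Nat.eqb x y then mu l else nu l.

(* lik x t n = probability that the depth-n truncation of the labeled GW tree
   rooted at a node with attribute x, together with the attributes of its
   depth-n nodes, equals the observation t.  Ill-formed observations get 0. *)
Fixpoint lik (x : nat) (t : obs L) (n : nat) {struct n} : R :=
  match n, t with
  | O, Leaf y => if Nat.eqb x y then 1 else 0
  | S m, Node cs =>
      poisson deg (length cs) *
      fold_right (fun c acc =>
          rsum r (fun y => trans x y * labp x y (fst c) * lik y (snd c) m) * acc)
        1 cs
  | _, _ => 0
  end.

Definition obs_prob (t : obs L) (R0 : nat) : R :=
  / INR r * rsum r (fun x => lik x t R0).

Definition posterior (x : nat) (t : obs L) (R0 : nat) : R :=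
  lik x t R0 / rsum r (fun y => lik y t R0).

Definition tau (labs : list L) : R :=
  / (INR r * (a + b)) * fold_right Rplus 0 (map (fun l => Rabs (a * mu l - b * nu l)) labs).

(* The probability (a countable sum of nonnegative terms over observations)
   of the event {t : eps < |P(sigma_rho = x | t) - 1/r|} at depth R0 is at most
   delta: every finite partial sum over distinct observations is <= delta. *)
Definition bad_prob_le (x : nat) (eps : R) (R0 : nat) (delta : R) : Prop :=
  forall s : list (obs L), NoDup s ->
    fold_right Rplus 0
      (map (fun t => if Rlt_dec eps (Rabs (posterior x t R0 - / INR r))
                     then obs_prob t R0 else 0) s)
    <= delta.
End GW.

(* A child's likelihood [sum_y trans x y * labp x y l * lik y t] is the sum of a term that does not
   depend on the parent's attribute [x] and a term of relative weight
   [|a mu(l) - b nu(l)| / (a + (r-1) b)].  So, per child, the total variation distance between the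
   laws of the observation given two parent attributes is at most the sum of these weights over [l]
   times the distance one generation down; for a product over children it grows at most linearly
   in their number, and averaging over the Poisson number of children multiplies it by the mean
   [d].  Hence the distance at depth [n] is at most [2 (omega tau)^n].  The root posterior deviates
   from [1/r] only where the likelihoods for different root attributes differ, so a Markov-type
   bound gives probability at most [2 (omega tau)^n / (eps r)] to an [eps]-deviation. *)

From Stdlib Require Import Reals List Lra Lia Classical Factorial.
Open Scope R_scope.

Definition lsum {A} (f : A -> R) (l : list A) : R := fold_right Rplus 0 (map f l).

(* The (possibly infinite) sum of [f] is at most [D]; [bad_prob_le] has this form. *)
Definition mass_le {A} (f : A -> R) (D : R) : Prop := forall s, NoDup s -> lsum f s <= D.

Lemma lsum_nil {A} (f : A -> R) : lsum f nil = 0.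
Proof. reflexivity. Qed.

Lemma lsum_cons {A} (f : A -> R) x l : lsum f (x :: l) = f x + lsum f l.
Proof. reflexivity. Qed.

Lemma lsum_app {A} (f : A -> R) l1 l2 : lsum f (l1 ++ l2) = lsum f l1 + lsum f l2.
Proof.
  induction l1 as [|x l1 IH]; cbn [app].
  - rewrite lsum_nil; ring.
  - rewrite !lsum_cons, IH; ring.
Qed.

Lemma lsum_map {A B} (f : B -> R) (h : A -> B) l : lsum f (map h l) = lsum (fun x => f (h x)) l.
Proof. unfold lsum; rewrite map_map; reflexivity. Qed.

Lemma lsum_flat_map {A B} (f : B -> R) (h : A -> list B) l :
  lsum f (flat_map h l) = lsum (fun x => lsum f (h x)) l.
Proof.
  induction l as [|x l IH]; [reflexivity|]; simpl flat_map.
  rewrite lsum_app, lsum_cons, IH; reflexivity.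
Qed.

Lemma lsum_ext {A} (f g : A -> R) l : (forall x, In x l -> f x = g x) -> lsum f l = lsum g l.
Proof.
  induction l as [|x l IH]; intros Hfg; [reflexivity|].
  rewrite !lsum_cons, Hfg, IH; [reflexivity| |simpl; auto].
  intros; apply Hfg; simpl; auto.
Qed.

Lemma lsum_le {A} (f g : A -> R) l : (forall x, In x l -> f x <= g x) -> lsum f l <= lsum g l.
Proof.
  induction l as [|x l IH]; intros Hfg; [rewrite !lsum_nil; lra|].
  rewrite !lsum_cons.
  assert (f x <= g x) by (apply Hfg; simpl; auto).
  assert (lsum f l <= lsum g l) by (apply IH; intros; apply Hfg; simpl; auto).
  lra.
Qed.

Lemma lsum_nonneg {A} (f : A -> R) l : (forall x, 0 <= f x) -> 0 <= lsum f l.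
Proof.
  intros Hf; induction l as [|x l IH]; [rewrite lsum_nil; lra|].
  rewrite lsum_cons; specialize (Hf x); lra.
Qed.

Lemma lsum_add {A} (f g : A -> R) l : lsum (fun x => f x + g x) l = lsum f l + lsum g l.
Proof. induction l as [|x l IH]; [rewrite !lsum_nil; ring|]. rewrite !lsum_cons, IH; ring. Qed.

Lemma lsum_scal_l {A} c (f : A -> R) l : lsum (fun x => c * f x) l = c * lsum f l.
Proof. induction l as [|x l IH]; [rewrite !lsum_nil; ring|]. rewrite !lsum_cons, IH; ring. Qed.

Lemma lsum_scal_r {A} c (f : A -> R) l : lsum (fun x => f x * c) l = lsum f l * c.
Proof. induction l as [|x l IH]; [rewrite !lsum_nil; ring|]. rewrite !lsum_cons, IH; ring. Qed.

Lemma lsum_const {A} c (l : list A) : lsum (fun _ => c) l = INR (length l) * c.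
Proof.
  induction l as [|x l IH]; [rewrite lsum_nil; simpl; ring|].
  rewrite lsum_cons, IH; cbn [length]; rewrite S_INR; ring.
Qed.

Lemma lsum_abs_le {A} (f : A -> R) l : Rabs (lsum f l) <= lsum (fun x => Rabs (f x)) l.
Proof.
  induction l as [|x l IH]; [rewrite !lsum_nil, Rabs_R0; lra|].
  rewrite !lsum_cons; eapply Rle_trans; [apply Rabs_triang|lra].
Qed.

Lemma lsum_comm {A B} (F : A -> B -> R) (l : list A) (m : list B) :
  lsum (fun x => lsum (F x) m) l = lsum (fun y => lsum (fun x => F x y) l) m.
Proof.
  induction l as [|x l IH].
  - rewrite lsum_nil; symmetry.
    induction m as [|y m IHm]; [reflexivity|]. rewrite lsum_cons, IHm, lsum_nil; ring.
  - rewrite lsum_cons, IH, <- lsum_add; apply lsum_ext; intros; reflexivity.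
Qed.

Lemma lsum_le_support {A} (f : A -> R) (s l : list A) : (forall x, 0 <= f x) -> NoDup s ->
  (forall x, In x s -> f x <> 0 -> In x l) -> lsum f s <= lsum f l.
Proof.
  intros Hf Hs; revert l; induction Hs as [|x s Hx Hs IH]; intros l Hsl.
  - rewrite lsum_nil; apply lsum_nonneg; auto.
  - rewrite lsum_cons; destruct (Req_dec (f x) 0) as [E|E].
    + rewrite E, Rplus_0_l; apply IH; intros; apply Hsl; simpl; auto.
    + destruct (in_split x l) as [l1 [l2 ->]]; [apply Hsl; simpl; auto|].
      assert (lsum f s <= lsum f (l1 ++ l2)).
      { apply IH; intros y Hy Hfy.
        specialize (Hsl y (or_intror Hy) Hfy); rewrite in_app_iff in *; simpl in Hsl.
        destruct Hsl as [|[<-|]]; tauto. }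
      rewrite lsum_app in *; rewrite lsum_cons; lra.
Qed.

Lemma exists_NoDup_equiv {A} (l : list A) : exists l', NoDup l' /\ forall x, In x l <-> In x l'.
Proof.
  induction l as [|x l [l' [Hl' Heq]]].
  - exists nil; split; [constructor|simpl; tauto].
  - destruct (classic (In x l')) as [Hx|Hx].
    + exists l'; split; auto; intros y; simpl; rewrite Heq; intuition congruence.
    + exists (x :: l'); split; [constructor; auto|]; intros y; simpl; rewrite Heq; tauto.
Qed.

Lemma lsum_seq_eqb n x (f : nat -> R) : (x < n)%nat ->
  lsum (fun y => if Nat.eqb x y then f y else 0) (seq 0 n) = f x.
Proof.
  induction n as [|n IH]; intros Hx; [lia|].
  rewrite seq_S, lsum_app, lsum_cons, lsum_nil; cbn [plus].
  destruct (Nat.eqb_spec x n) as [<-|Hxn].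
  - rewrite (lsum_ext _ (fun _ => 0)), lsum_const; [ring|].
    intros y Hy; apply in_seq in Hy; destruct (Nat.eqb_spec x y); [lia|reflexivity].
  - rewrite IH by lia; ring.
Qed.

Section Mass.
Context {A : Type}.
Implicit Types (f g : A -> R).

Lemma mass_le_ge0 f D : mass_le f D -> 0 <= D.
Proof. intros Hf; apply (Hf nil); constructor. Qed.

Lemma mass_le_weaken f D D' : mass_le f D -> D <= D' -> mass_le f D'.
Proof. intros Hf HD s Hs; specialize (Hf s Hs); lra. Qed.

Lemma mass_le_mono f g D : (forall x, f x <= g x) -> mass_le g D -> mass_le f D.
Proof. intros Hfg Hg s Hs; eapply Rle_trans; [apply lsum_le; auto|apply Hg, Hs]. Qed.

Lemma mass_le_scal c f D : 0 <= c -> mass_le f D -> mass_le (fun x => c * f x) (c * D).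
Proof. intros Hc Hf s Hs; rewrite lsum_scal_l; apply Rmult_le_compat_l; auto. Qed.

Lemma mass_le_lsum {I} (F : I -> A -> R) (D : I -> R) (ys : list I) :
  (forall y, In y ys -> mass_le (F y) (D y)) ->
  mass_le (fun x => lsum (fun y => F y x) ys) (lsum D ys).
Proof. intros HF s Hs; rewrite lsum_comm; apply lsum_le; intros y Hy; apply HF; auto. Qed.

Lemma mass_le_support f l : (forall x, 0 <= f x) -> (forall x, f x <> 0 -> In x l) ->
  mass_le f (lsum f l).
Proof. intros Hf Hl s Hs; apply lsum_le_support; auto. Qed.

End Mass.

Lemma mass_le_pair {A B} (labs : list A) (F : A * B -> R) (D : A -> R) :
  (forall l, In l labs) -> (forall c, 0 <= F c) ->
  (forall l, mass_le (fun t => F (l, t)) (D l)) -> mass_le F (lsum D labs).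
Proof.
  intros Hlabs HF HD s Hs.
  destruct (exists_NoDup_equiv (map snd s)) as [T [HT HTs]].
  apply Rle_trans with (lsum F (flat_map (fun l => map (pair l) T) labs)).
  - apply lsum_le_support; auto; intros [l t] Hin _.
    apply in_flat_map; exists l; split; auto.
    apply in_map, HTs; change t with (snd (l, t)); apply in_map, Hin.
  - rewrite lsum_flat_map; apply lsum_le; intros l _.
    rewrite lsum_map; apply HD, HT.
Qed.

Lemma mass_le_obs_node {L} (F : obs L -> R) D : (forall t, 0 <= F t) ->
  (forall y, F (Leaf y) = 0) -> mass_le (fun cs => F (Node cs)) D -> mass_le F D.
Proof.
  intros HF HLeaf HNode s Hs.
  destruct (exists_NoDup_equiv
    (flat_map (fun t => match t with Node cs => cs :: nil | Leaf _ => nil end) s)) as [CS [HCS Heq]].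
  apply Rle_trans with (lsum F (map Node CS)).
  - apply lsum_le_support; auto; intros [y|cs] Hin HF0; [rewrite HLeaf in HF0; lra|].
    apply in_map, Heq, in_flat_map; exists (Node cs); simpl; auto.
  - rewrite lsum_map; apply HNode, HCS.
Qed.

Lemma sum_f_R0_shift (w : nat -> R) K :
  sum_f_R0 w (S K) = w O + sum_f_R0 (fun k => w (S k)) K.
Proof. rewrite decomp_sum by lia; reflexivity. Qed.

Lemma list_lengths_bounded {C} (SS : list (list C)) :
  exists K, forall cs, In cs SS -> (length cs <= K)%nat.
Proof.
  induction SS as [|cs SS [K HK]]; [exists O; simpl; tauto|].
  exists (Nat.max (length cs) K); intros cs' [<-|Hin]; [lia|specialize (HK cs' Hin); lia].
Qed.

Section ListProducts.
Variable C : Type.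
Implicit Types (g : C -> R) (SS : list (list C)).

Definition lprod g (cs : list C) : R := fold_right (fun c acc => g c * acc) 1 cs.

Lemma lprod_nonneg g cs : (forall c, 0 <= g c) -> 0 <= lprod g cs.
Proof. intros Hg; induction cs; simpl; [lra|apply Rmult_le_pos; auto]. Qed.

Lemma lsum_le_nil (F : list C -> R) SS : (forall cs, 0 <= F cs) -> NoDup SS ->
  (forall cs, In cs SS -> (length cs <= 0)%nat) -> lsum F SS <= F nil.
Proof.
  intros HF HSS HK; rewrite <- (Rplus_0_r (F nil)); change (F nil + 0) with (lsum F (nil :: nil)).
  apply lsum_le_support; auto.
  intros [|c t] Hin _; [left; reflexivity|specialize (HK _ Hin); simpl in HK; lia].
Qed.

Lemma lsum_le_head_tail (F : list C -> R) SS K : (forall cs, 0 <= F cs) -> NoDup SS ->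
  (forall cs, In cs SS -> (length cs <= S K)%nat) ->
  exists H T, NoDup H /\ NoDup T /\ (forall t, In t T -> (length t <= K)%nat) /\
    lsum F SS <= F nil + lsum (fun c => lsum (fun t => F (c :: t)) T) H.
Proof.
  intros HF HSS HK.
  destruct (exists_NoDup_equiv (flat_map (firstn 1) SS)) as [H [HH HHeq]].
  destruct (exists_NoDup_equiv (map (@tl C) SS)) as [T [HT HTeq]].
  exists H, T; repeat split; auto.
  - intros t Ht; apply HTeq, in_map_iff in Ht as [cs [<- Hcs]].
    specialize (HK cs Hcs); destruct cs; simpl in *; lia.
  - apply Rle_trans with (lsum F (nil :: flat_map (fun c => map (cons c) T) H)).
    + apply lsum_le_support; auto; intros [|c t] Hin _; [left; reflexivity|right].
      apply in_flat_map; exists c; split.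
      * apply HHeq, in_flat_map; exists (c :: t); simpl; auto.
      * apply in_map, HTeq; change t with (tl (c :: t)); apply in_map, Hin.
    + rewrite lsum_cons, lsum_flat_map; right; f_equal.
      apply lsum_ext; intros; apply lsum_map.
Qed.

Section SubProbability.
Variable g : C -> R.
Hypotheses (Hg_nonneg : forall c, 0 <= g c) (Hg_mass : mass_le g 1).

Lemma lsum_weighted_lprod_le K : forall w, (forall k, 0 <= w k) ->
  forall SS, NoDup SS -> (forall cs, In cs SS -> (length cs <= K)%nat) ->
  lsum (fun cs => w (length cs) * lprod g cs) SS <= sum_f_R0 w K.
Proof.
  induction K as [|K IH]; intros w Hw SS HSS HK.
  - eapply Rle_trans; [apply lsum_le_nil; auto|].
    + intros; apply Rmult_le_pos; auto using lprod_nonneg.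
    + simpl; lra.
  - destruct (lsum_le_head_tail (fun cs => w (length cs) * lprod g cs) SS K)
      as [H [T [HH [HT [HTK Hle]]]]]; auto.
    { intros; apply Rmult_le_pos; auto using lprod_nonneg. }
    set (tails := lsum (fun t => w (S (length t)) * lprod g t) T).
    assert (Htails : 0 <= tails <= sum_f_R0 (fun k => w (S k)) K).
    { split; [apply lsum_nonneg; intros; apply Rmult_le_pos; auto using lprod_nonneg|].
      unfold tails; apply (IH (fun k => w (S k))); auto. }
    eapply Rle_trans; [apply Hle|]; rewrite sum_f_R0_shift.
    rewrite (lsum_ext _ (fun c => g c * tails)).
    2: { intros c _; unfold tails; rewrite <- lsum_scal_l; apply lsum_ext; intros; simpl; ring. }
    rewrite lsum_scal_r; cbn [length lprod fold_right].
    assert (0 <= lsum g H <= 1) by (split; [apply lsum_nonneg|apply Hg_mass]; auto).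
    assert (lsum g H * tails <= 1 * sum_f_R0 (fun k => w (S k)) K)
      by (apply Rmult_le_compat; lra).
    lra.
Qed.

Lemma mass_le_weighted_lprod w M : (forall k, 0 <= w k) -> (forall K, sum_f_R0 w K <= M) ->
  mass_le (fun cs => w (length cs) * lprod g cs) M.
Proof.
  intros Hw HM SS HSS; destruct (list_lengths_bounded SS) as [K HK].
  eapply Rle_trans; [apply lsum_weighted_lprod_le|]; eauto.
Qed.
End SubProbability.

Lemma sum_f_R0_succ_weight (v : nat -> R) K :
  sum_f_R0 (fun k => INR (S k) * v k) K = sum_f_R0 v K + sum_f_R0 (fun k => INR k * v k) K.
Proof. rewrite <- plus_sum; apply sum_eq; intros; rewrite S_INR; ring. Qed.

Lemma Rabs_mul_sub_le x x' p p' : 0 <= x' -> 0 <= p ->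
  Rabs (x * p - x' * p') <= Rabs (x - x') * p + x' * Rabs (p - p').
Proof.
  intros Hx' Hp.
  replace (x * p - x' * p') with ((x - x') * p + x' * (p - p')) by ring.
  eapply Rle_trans; [apply Rabs_triang|].
  rewrite !Rabs_mult, (Rabs_pos_eq p), (Rabs_pos_eq x'); lra.
Qed.

Section TwoSubProbabilities.
Variables (g g' : C -> R) (D : R).
Hypotheses (Hg_nonneg : forall c, 0 <= g c) (Hg_mass : mass_le g 1)
  (Hg'_nonneg : forall c, 0 <= g' c) (Hg'_mass : mass_le g' 1)
  (Hdiff_mass : mass_le (fun c => Rabs (g c - g' c)) D).

Lemma lsum_weighted_lprod_diff_le K : forall w, (forall k, 0 <= w k) ->
  forall SS, NoDup SS -> (forall cs, In cs SS -> (length cs <= K)%nat) ->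
  lsum (fun cs => w (length cs) * Rabs (lprod g cs - lprod g' cs)) SS
  <= D * sum_f_R0 (fun k => INR k * w k) K.
Proof.
  induction K as [|K IH]; intros w Hw SS HSS HK.
  - eapply Rle_trans; [apply lsum_le_nil; auto|].
    + intros; apply Rmult_le_pos; auto using Rabs_pos.
    + cbn [lprod fold_right sum_f_R0 INR]; rewrite Rminus_diag, Rabs_R0; lra.
  - destruct (lsum_le_head_tail (fun cs => w (length cs) * Rabs (lprod g cs - lprod g' cs)) SS K)
      as [H [T [HH [HT [HTK Hle]]]]]; auto.
    { intros; apply Rmult_le_pos; auto using Rabs_pos. }
    set (w' := fun k => w (S k)).
    set (tails := lsum (fun t => w' (length t) * lprod g t) T).
    set (tails_diff := lsum (fun t => w' (length t) * Rabs (lprod g t - lprod g' t)) T).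
    assert (Htails : 0 <= tails <= sum_f_R0 w' K).
    { split; [apply lsum_nonneg; intros; apply Rmult_le_pos; unfold w'; auto using lprod_nonneg|].
      apply lsum_weighted_lprod_le; unfold w'; auto. }
    assert (Htails_diff : 0 <= tails_diff <= D * sum_f_R0 (fun k => INR k * w' k) K).
    { split; [apply lsum_nonneg; intros; apply Rmult_le_pos; unfold w'; auto using Rabs_pos|].
      apply IH; unfold w'; auto. }
    assert (Hstep : forall c, lsum (fun t => w (length (c :: t)) *
                      Rabs (lprod g (c :: t) - lprod g' (c :: t))) T
                    <= Rabs (g c - g' c) * tails + g' c * tails_diff).
    { intros c; unfold tails, tails_diff, w'; rewrite <- !lsum_scal_l, <- lsum_add.
      apply lsum_le; intros t _.
      change (lprod g (c :: t)) with (g c * lprod g t).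
      change (lprod g' (c :: t)) with (g' c * lprod g' t).
      apply Rle_trans with (w (S (length t)) *
        (Rabs (g c - g' c) * lprod g t + g' c * Rabs (lprod g t - lprod g' t))); [|right; ring].
      apply Rmult_le_compat_l; auto using Rabs_mul_sub_le, lprod_nonneg. }
    eapply Rle_trans; [apply Hle|].
    eapply Rle_trans; [apply Rplus_le_compat_l, lsum_le; intros c _; apply Hstep|].
    rewrite lsum_add, !lsum_scal_r; cbn [lprod fold_right length].
    rewrite Rminus_diag, Rabs_R0, Rmult_0_r, Rplus_0_l.
    rewrite sum_f_R0_shift, Rmult_0_l, Rplus_0_l, sum_f_R0_succ_weight.
    assert (0 <= lsum (fun c => Rabs (g c - g' c)) H <= D)
      by (split; [apply lsum_nonneg; intros; apply Rabs_pos|apply Hdiff_mass; auto]).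
    assert (0 <= lsum g' H <= 1) by (split; [apply lsum_nonneg|apply Hg'_mass]; auto).
    assert (lsum (fun c => Rabs (g c - g' c)) H * tails <= D * sum_f_R0 w' K)
      by (apply Rmult_le_compat; lra).
    assert (lsum g' H * tails_diff <= 1 * (D * sum_f_R0 (fun k => INR k * w' k) K))
      by (apply Rmult_le_compat; lra).
    unfold w' in *; lra.
Qed.

Lemma mass_le_weighted_lprod_diff w M : (forall k, 0 <= w k) ->
  (forall K, sum_f_R0 (fun k => INR k * w k) K <= M) ->
  mass_le (fun cs => w (length cs) * Rabs (lprod g cs - lprod g' cs)) (D * M).
Proof.
  intros Hw HM SS HSS; destruct (list_lengths_bounded SS) as [K HK].
  eapply Rle_trans; [apply lsum_weighted_lprod_diff_le; eauto|].
  apply Rmult_le_compat_l; [apply (mass_le_ge0 _ _ Hdiff_mass)|apply HM].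
Qed.
End TwoSubProbabilities.
End ListProducts.

Lemma poisson_nonneg lam k : 0 <= lam -> 0 <= poisson lam k.
Proof.
  intros Hlam; unfold poisson, Rdiv.
  apply Rmult_le_pos; [apply Rmult_le_pos; [left; apply exp_pos|apply pow_le; auto]|].
  left; apply Rinv_0_lt_compat, INR_fact_lt_0.
Qed.

Lemma poisson_succ lam k : INR (S k) * poisson lam (S k) = lam * poisson lam k.
Proof.
  unfold poisson; rewrite fact_simpl, mult_INR; simpl pow.
  assert (INR (S k) <> 0) by (apply not_0_INR; lia).
  assert (INR (fact k) <> 0) by apply INR_fact_neq_0.
  field; auto.
Qed.

Lemma exp_partial_sum_le lam K : 0 <= lam ->
  sum_f_R0 (fun i => / INR (fact i) * lam ^ i) K <= exp lam.
Proof.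
  intros Hlam; apply growing_ineq; [|exact (proj2_sig (exist_exp lam))].
  intros n; cbn [sum_f_R0].
  assert (0 <= / INR (fact (S n)) * lam ^ S n).
  { apply Rmult_le_pos; [left; apply Rinv_0_lt_compat, INR_fact_lt_0|apply pow_le; auto]. }
  lra.
Qed.

Lemma poisson_partial_sum_le_1 lam K : 0 <= lam -> sum_f_R0 (poisson lam) K <= 1.
Proof.
  intros Hlam.
  rewrite (sum_eq _ (fun i => / INR (fact i) * lam ^ i * exp (- lam)))
    by (intros; unfold poisson, Rdiv; ring).
  rewrite <- scal_sum.
  replace 1 with (exp (- lam) * exp lam) by (rewrite <- exp_plus, Rplus_opp_l; apply exp_0).
  apply Rmult_le_compat_l; [left; apply exp_pos|apply exp_partial_sum_le; auto].
Qed.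

Lemma poisson_partial_mean_le lam K : 0 <= lam ->
  sum_f_R0 (fun k => INR k * poisson lam k) K <= lam.
Proof.
  intros Hlam; destruct K as [|K]; [simpl; lra|].
  rewrite sum_f_R0_shift, (sum_eq _ (fun k => poisson lam k * lam)).
  2: { intros; rewrite poisson_succ; ring. }
  rewrite <- scal_sum; simpl INR.
  assert (lam * sum_f_R0 (poisson lam) K <= lam * 1)
    by (apply Rmult_le_compat_l, poisson_partial_sum_le_1; auto).
  lra.
Qed.

(* When all weights vanish, [p x / 0 = 0] in Rocq, but then the left-hand side is [0] anyway. *)
Lemma uniform_deviation_le (p : nat -> R) n x eps : (0 < n)%nat -> 0 < eps ->
  (forall y, 0 <= p y) -> eps < Rabs (p x / rsum n p - / INR n) ->
  / INR n * rsum n p <= / (eps * INR n * INR n) * lsum (fun y => Rabs (p x - p y)) (seq 0 n).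
Proof.
  intros Hn Heps Hp Hdev.
  change (rsum n p) with (lsum p (seq 0 n)) in *.
  set (S := lsum p (seq 0 n)) in *.
  set (M := lsum (fun y => Rabs (p x - p y)) (seq 0 n)).
  assert (Hn0 : 0 < INR n) by (apply lt_0_INR; lia).
  assert (HS : 0 <= S) by (apply lsum_nonneg; auto).
  assert (HM : Rabs (INR n * p x - S) <= M).
  { replace (INR n * p x - S) with (lsum (fun y => p x - p y) (seq 0 n)); [apply lsum_abs_le|].
    unfold S; rewrite (lsum_ext _ (fun y => p x + -1 * p y)) by (intros; ring).
    rewrite lsum_add, lsum_const, lsum_scal_l, length_seq; ring. }
  destruct (Req_dec S 0) as [HS0|HS0].
  { rewrite HS0, Rmult_0_r; apply Rmult_le_pos; [|apply lsum_nonneg; intros; apply Rabs_pos].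
    left; apply Rinv_0_lt_compat; apply Rmult_lt_0_compat; [apply Rmult_lt_0_compat|]; lra. }
  assert (HnS : 0 < INR n * S) by (apply Rmult_lt_0_compat; lra).
  replace (p x / S - / INR n) with ((INR n * p x - S) / (INR n * S)) in Hdev by (field; lra).
  unfold Rdiv in Hdev; rewrite Rabs_mult, (Rabs_pos_eq (/ _)) in Hdev
    by (left; apply Rinv_0_lt_compat; lra).
  assert (eps * (INR n * S) < M).
  { apply (Rmult_lt_compat_r (INR n * S)) in Hdev; auto.
    rewrite Rmult_assoc, Rinv_l, Rmult_1_r in Hdev by lra; lra. }
  replace (/ INR n * S) with (/ (eps * INR n * INR n) * (eps * (INR n * S))) by (field; lra).
  left; apply Rmult_lt_compat_l; [|lra].
  apply Rinv_0_lt_compat; apply Rmult_lt_0_compat; [apply Rmult_lt_0_compat|]; lra.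
Qed.

Section GaltonWatson.
Variables (L : Type) (labs : list L) (r : nat) (a b omega : R) (mu nu : L -> R).
Hypotheses (Hr : (0 < r)%nat) (Ha : 0 < a) (Hb : 0 < b) (Homega : 0 <= omega)
  (Hlabs_full : forall l, In l labs)
  (Hmu_nonneg : forall l, 0 <= mu l) (Hmu_sum : lsum mu labs = 1)
  (Hnu_nonneg : forall l, 0 <= nu l) (Hnu_sum : lsum nu labs = 1).

Local Notation lk := (lik L r a b omega mu nu).
Local Notation tnorm := (a + INR (r - 1) * b).

Lemma tnorm_pos : 0 < tnorm.
Proof. assert (0 <= INR (r - 1) * b) by (apply Rmult_le_pos; [apply pos_INR|lra]); lra. Qed.

Lemma deg_nonneg : 0 <= deg r a b omega.
Proof.
  pose proof tnorm_pos; unfold deg, Rdiv.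
  apply Rmult_le_pos; [apply Rmult_le_pos; lra|].
  left; apply Rinv_0_lt_compat, Rmult_lt_0_compat; [apply lt_0_INR; lia|lra].
Qed.

Lemma trans_nonneg x y : 0 <= trans r a b x y.
Proof.
  pose proof tnorm_pos; unfold trans.
  destruct Nat.eqb; apply Rmult_le_pos; try lra; left; apply Rinv_0_lt_compat; lra.
Qed.

Lemma labp_nonneg x y l : 0 <= labp L mu nu x y l.
Proof. unfold labp; destruct Nat.eqb; auto. Qed.

Lemma trans_sum x : (x < r)%nat -> lsum (trans r a b x) (seq 0 r) = 1.
Proof.
  intros Hx; pose proof tnorm_pos.
  rewrite (lsum_ext _ (fun y => b / tnorm + (if Nat.eqb x y then (a - b) / tnorm else 0))).
  2: { intros y _; unfold trans; destruct Nat.eqb; field; lra. }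
  rewrite lsum_add, lsum_const, length_seq, (lsum_seq_eqb r x (fun _ => (a - b) / tnorm)) by auto.
  rewrite minus_INR in * by lia; simpl INR in *; field; lra.
Qed.

Lemma labp_sum x y : lsum (labp L mu nu x y) labs = 1.
Proof. unfold labp; destruct Nat.eqb; auto. Qed.

Definition child_lik (x m : nat) (c : L * obs L) : R :=
  rsum r (fun y => trans r a b x y * labp L mu nu x y (fst c) * lk y (snd c) m).

Lemma lik_Node x cs m :
  lk x (Node cs) (S m) = poisson (deg r a b omega) (length cs) * lprod _ (child_lik x m) cs.
Proof. reflexivity. Qed.

Lemma lik_nonneg n : forall x t, 0 <= lk x t n.
Proof.
  induction n as [|n IH]; intros x [y|cs]; simpl; try lra.
  - destruct Nat.eqb; lra.
  - apply Rmult_le_pos; [apply poisson_nonneg, deg_nonneg|].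
    apply (lprod_nonneg _ (child_lik x n)); intros c; apply lsum_nonneg; intros y.
    apply Rmult_le_pos; [apply Rmult_le_pos|]; auto using trans_nonneg, labp_nonneg.
Qed.

Lemma child_lik_nonneg x m c : 0 <= child_lik x m c.
Proof.
  apply lsum_nonneg; intros y.
  apply Rmult_le_pos; [apply Rmult_le_pos|]; auto using trans_nonneg, labp_nonneg, lik_nonneg.
Qed.

Lemma child_lik_mass_le_1 x m : (x < r)%nat ->
  (forall y, (y < r)%nat -> mass_le (fun t => lk y t m) 1) -> mass_le (child_lik x m) 1.
Proof.
  intros Hx Hlik.
  eapply mass_le_weaken.
  - apply (mass_le_pair labs _
      (fun l => lsum (fun y => trans r a b x y * labp L mu nu x y l * 1) (seq 0 r)));
      auto using child_lik_nonneg.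
    intros l; apply (mass_le_lsum (fun y t => trans r a b x y * labp L mu nu x y l * lk y t m)).
    intros y Hy; apply in_seq in Hy; apply mass_le_scal.
    + apply Rmult_le_pos; auto using trans_nonneg, labp_nonneg.
    + apply Hlik; lia.
  - right; rewrite lsum_comm, <- (trans_sum x Hx) at 1; apply lsum_ext; intros y _.
    rewrite (lsum_ext _ (fun l => trans r a b x y * labp L mu nu x y l)) by (intros; ring).
    rewrite lsum_scal_l, labp_sum; ring.
Qed.

Lemma lik_mass_le_1 n : forall x, (x < r)%nat -> mass_le (fun t => lk x t n) 1.
Proof.
  induction n as [|n IH]; intros x Hx.
  - eapply mass_le_weaken; [apply (mass_le_support _ (Leaf x :: nil))|].
    + intros; apply lik_nonneg.
    + intros [y|cs] Hy; simpl in Hy; [|now contradict Hy].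
      destruct (Nat.eqb_spec x y); [subst y; left; reflexivity|lra].
    + rewrite lsum_cons, lsum_nil; simpl; rewrite Nat.eqb_refl; lra.
  - apply mass_le_obs_node; [intros; apply lik_nonneg|reflexivity|].
    apply mass_le_weighted_lprod.
    + intros; apply child_lik_nonneg.
    + apply child_lik_mass_le_1; auto.
    + intros; apply poisson_nonneg, deg_nonneg.
    + intros; apply poisson_partial_sum_le_1, deg_nonneg.
Qed.

(* The first summand does not depend on the parent's attribute [x]: only the second one, of
   relative size [|a mu(l) - b nu(l)| / (a + (r-1) b)], carries information about [x]. *)
Lemma child_lik_split x m l t : (x < r)%nat -> child_lik x m (l, t) =
  lsum (fun y => b * nu l / tnorm * lk y t m) (seq 0 r) + (a * mu l - b * nu l) / tnorm * lk x t m.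
Proof.
  intros Hx; pose proof tnorm_pos.
  change (child_lik x m (l, t))
    with (lsum (fun y => trans r a b x y * labp L mu nu x y l * lk y t m) (seq 0 r)).
  rewrite (lsum_ext (fun y => trans r a b x y * labp L mu nu x y l * lk y t m)
    (fun y => b * nu l / tnorm * lk y t m +
      (if Nat.eqb x y then (a * mu l - b * nu l) / tnorm * lk y t m else 0))).
  2: { intros y _; unfold trans, labp; destruct Nat.eqb; field; lra. }
  rewrite lsum_add, (lsum_seq_eqb r x (fun y => (a * mu l - b * nu l) / tnorm * lk y t m)); auto.
Qed.

Definition child_contraction : R := lsum (fun l => Rabs ((a * mu l - b * nu l) / tnorm)) labs.

Lemma child_lik_diff_mass_le x x' m D : (x < r)%nat -> (x' < r)%nat ->
  mass_le (fun t => Rabs (lk x t m - lk x' t m)) D ->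
  mass_le (fun c => Rabs (child_lik x m c - child_lik x' m c)) (child_contraction * D).
Proof.
  intros Hx Hx' HD; unfold child_contraction; rewrite <- lsum_scal_r.
  apply mass_le_pair; auto using Rabs_pos; intros l.
  apply (mass_le_mono _ (fun t => Rabs ((a * mu l - b * nu l) / tnorm) * Rabs (lk x t m - lk x' t m))).
  - intros t; rewrite !child_lik_split, <- Rabs_mult by auto; right; f_equal; ring.
  - apply mass_le_scal; auto using Rabs_pos.
Qed.

Definition contraction : R := deg r a b omega * child_contraction.

Lemma contraction_nonneg : 0 <= contraction.
Proof.
  apply Rmult_le_pos; [apply deg_nonneg|apply lsum_nonneg; intros; apply Rabs_pos].
Qed.

Lemma lik_diff_mass_le n : forall x x', (x < r)%nat -> (x' < r)%nat ->
  mass_le (fun t => Rabs (lk x t n - lk x' t n)) (2 * contraction ^ n).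
Proof.
  induction n as [|n IH]; intros x x' Hx Hx'.
  - eapply mass_le_weaken; [apply (mass_le_support _ (Leaf x :: Leaf x' :: nil))|].
    + intros; apply Rabs_pos.
    + intros [y|cs] Hy; simpl in Hy; [|rewrite Rminus_diag, Rabs_R0 in Hy; lra].
      destruct (Nat.eqb_spec x y); [subst y; left; reflexivity|].
      destruct (Nat.eqb_spec x' y); [subst y; right; left; reflexivity|].
      rewrite Rminus_diag, Rabs_R0 in Hy; lra.
    + assert (Hle1 : forall t, Rabs (lk x t 0 - lk x' t 0) <= 1).
      { intros [y|cs]; simpl; [destruct (Nat.eqb x y), (Nat.eqb x' y)|];
          unfold Rabs; destruct Rcase_abs; lra. }
      rewrite !lsum_cons, lsum_nil; pose proof (Hle1 (Leaf x)); pose proof (Hle1 (Leaf x')).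
      simpl pow; lra.
  - apply mass_le_obs_node; [intros; apply Rabs_pos|intros; simpl; rewrite Rminus_diag; apply Rabs_R0|].
    apply (mass_le_mono _ (fun cs => poisson (deg r a b omega) (length cs) *
      Rabs (lprod _ (child_lik x n) cs - lprod _ (child_lik x' n) cs))).
    { intros cs; rewrite !lik_Node, <- Rmult_minus_distr_l, Rabs_mult, Rabs_pos_eq;
        [lra|apply poisson_nonneg, deg_nonneg]. }
    eapply mass_le_weaken; [apply mass_le_weighted_lprod_diff|].
    + intros; apply child_lik_nonneg.
    + apply child_lik_mass_le_1; auto using lik_mass_le_1.
    + intros; apply child_lik_nonneg.
    + apply child_lik_mass_le_1; auto using lik_mass_le_1.
    + apply child_lik_diff_mass_le, IH; auto.
    + intros; apply poisson_nonneg, deg_nonneg.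
    + intros; apply poisson_partial_mean_le, deg_nonneg.
    + right; unfold contraction; simpl pow; ring.
Qed.

Lemma contraction_eq_omega_tau : contraction = omega * tau L r a b mu nu labs.
Proof.
  pose proof tnorm_pos; assert (INR r <> 0) by (apply not_0_INR; lia).
  unfold contraction, child_contraction, tau, deg.
  rewrite (lsum_ext _ (fun l => Rabs (a * mu l - b * nu l) * / tnorm)).
  2: { intros l _; unfold Rdiv; rewrite Rabs_mult, Rabs_inv, (Rabs_pos_eq tnorm); lra. }
  rewrite lsum_scal_r; unfold lsum; field; lra.
Qed.

Lemma contraction_lt_1 : omega < / tau L r a b mu nu labs -> contraction < 1.
Proof.
  intros Hsub; rewrite contraction_eq_omega_tau.
  assert (Htau : 0 <= tau L r a b mu nu labs).
  { apply Rmult_le_pos; [left; apply Rinv_0_lt_compat, Rmult_lt_0_compat; [apply lt_0_INR; lia|lra]|].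
    apply (lsum_nonneg (fun l => Rabs (a * mu l - b * nu l))); intros; apply Rabs_pos. }
  destruct (Req_dec (tau L r a b mu nu labs) 0) as [Htau0|Htau0].
  (* [/ 0 = 0] in Rocq, so here [Hsub] would say [omega < 0]. *)
  - rewrite Htau0, Rinv_0 in Hsub; lra.
  - apply (Rmult_lt_compat_r (tau L r a b mu nu labs)) in Hsub; [|lra].
    rewrite Rinv_l in Hsub; lra.
Qed.

Lemma bad_prob_le_geometric x eps n : (x < r)%nat -> 0 < eps ->
  bad_prob_le L r a b omega mu nu x eps n (2 * contraction ^ n / (eps * INR r)).
Proof.
  intros Hx Heps.
  assert (Hr0 : 0 < INR r) by (apply lt_0_INR; lia).
  assert (Hc : 0 < / (eps * INR r * INR r))
    by (apply Rinv_0_lt_compat, Rmult_lt_0_compat; [apply Rmult_lt_0_compat|]; lra).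
  apply (mass_le_weaken _ (/ (eps * INR r * INR r) * lsum (fun _ => 2 * contraction ^ n) (seq 0 r))).
  - apply (mass_le_mono _ (fun t => / (eps * INR r * INR r) *
      lsum (fun y => Rabs (lk x t n - lk y t n)) (seq 0 r))).
    + intros t; destruct Rlt_dec as [Hdev|].
      * apply (uniform_deviation_le (fun y => lk y t n)); auto using lik_nonneg.
      * apply Rmult_le_pos; [lra|apply lsum_nonneg; intros; apply Rabs_pos].
    + apply mass_le_scal; [lra|apply mass_le_lsum].
      intros y Hy; apply in_seq in Hy; apply lik_diff_mass_le; lia.
  - rewrite lsum_const, length_seq; right; field; lra.
Qed.
End GaltonWatson.

Theorem lemma2 (L : Type) (labs : list L) (r : nat) (a b omega : R)
  (mu nu : L -> R)
  (Hlabs_nodup : NoDup labs) (Hlabs_full : forall l : L, In l labs)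
  (Hr : (2 <= r)%nat) (Ha : 0 < a) (Hb : 0 < b) (Homega : 0 < omega)
  (Hmu_nonneg : forall l, 0 <= mu l) (Hmu_sum : fold_right Rplus 0 (map mu labs) = 1)
  (Hnu_nonneg : forall l, 0 <= nu l) (Hnu_sum : fold_right Rplus 0 (map nu labs) = 1)
  (Hdistinct : exists l, mu l <> nu l)
  (Hsub : omega < / tau L r a b mu nu labs) :
  forall x : nat, (x < r)%nat ->
  forall eps delta : R, 0 < eps -> 0 < delta ->
  exists R0 : nat, forall R1 : nat, (R0 <= R1)%nat ->
    bad_prob_le L r a b omega mu nu x eps R1 delta.
Proof.
  intros x Hx eps delta Heps Hdelta.
  assert (Hr0 : (0 < r)%nat) by lia.
  assert (Hrpos : 0 < INR r) by (apply lt_0_INR; lia).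
  assert (Homega0 : 0 <= omega) by lra.
  set (q := contraction L labs r a b omega mu nu).
  assert (Hq : 0 <= q < 1) by (split; [apply contraction_nonneg|apply contraction_lt_1]; auto).
  destruct (pow_lt_1_zero q ltac:(rewrite Rabs_pos_eq; lra) (delta * eps * INR r / 2)) as [N HN].
  { apply Rmult_lt_0_compat; [repeat apply Rmult_lt_0_compat|]; lra. }
  exists N; intros R1 HR1.
  specialize (HN R1 HR1); rewrite Rabs_pos_eq in HN by (apply pow_le; lra).
  pose proof (bad_prob_le_geometric L labs r a b omega mu nu Hr0 Ha Hb Homega0 Hlabs_full
    Hmu_nonneg Hmu_sum Hnu_nonneg Hnu_sum x eps R1 Hx Heps) as Hbound.
  intros s Hs; eapply Rle_trans; [apply Hbound, Hs|]; fold q.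
  apply Rle_trans with (delta * eps * INR r / 2 * 2 / (eps * INR r)); [|right; field; lra].
  unfold Rdiv; apply Rmult_le_compat_r; [left; apply Rinv_0_lt_compat, Rmult_lt_0_compat|]; lra.
Qed.
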